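(* The transducer $\mathcal O_H$ generates the optimal configurations in the Hanoi Towers Problem. More precisely, for $x,y \in\{0,1,2\}$, $x \neq y$, starting at state $t_{xy}$, and feeding the reversal $m_i(n)^R$ of the length $n$ row $i$ binary Gray code word from $M_n$ into $\mathcal O_H$ produces the reverse of the length $n$ ternary word representing the unique $n$ disk configuration at distance $i$ along the geodesic from $x^n$ to $y^n$ in $\Gamma_n$.
   Context: Let $X_2=\{0,1\}$, $X_3=\{0,1,2\}$. Define matrices $M_n$ of size $2^n \times n$ with entries in $X_2$ by $M_1 = \begin{bmatrix} 0 \\ 1 \end{bmatrix}$, $M_{n+1} = \begin{bmatrix} M_n & 0_n \\ M_n^R & 1_n \end{bmatrix}$, where $M_n^R$ is $M_n$ with the order of rows reversed and $0_n,1_n$ are constant columns of length $2^n$; $m_i(n)$ is row $i$ of $M_n$ (rows indexed from $0$). In the Hanoi Towers Problem on pegs $0,1,2$ with disks $1,\dots,n$, a configuration is encoded by the word $x_1\dots x_n$ over $X_3$, meaning disk $i$ is on peg $x_i$. For $0\le i<j\le 2$ let $a_{ij}$ be the ternary tree automorphism changing the first occurrence of $i$ or $j$ in a word to the other symbol (a move between pegs $i$ and $j$), and let $\Gamma_n$ be the graph whose vertices are the words of length $n$ over $X_3$, with an edge between $w$ and $a_{ij}(w)$ for each $a_{ij}$ (the Schreier graph of the Hanoi Towers group at level $n$). The 2 to 3 transducer $\mathcal O_H$ has six states $t_{xy}$, $x\ne y$ in $X_3$, defined as follows: if $z$ is the third element of $X_3$, then $t_{xy}(0w)=x\,t_{xz}(w)$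 and $t_{xy}(1w)=y\,t_{yz}(w)$, and $t_{xy}(\emptyset)=\emptyset$. *)

From mathcomp Require Import all_boot.
Set Implicit Arguments. Unset Strict Implicit. Unset Printing Implicit Defensive.

(* X_2 = bool (0 = false, 1 = true); X_3 = 'I_3 *)

Fixpoint grayM (n : nat) : seq (seq bool) :=
  match n with
  | 0 => [:: [::]]
  | m.+1 => [seq rcons r false | r <- grayM m] ++ [seq rcons r true | r <- rev (grayM m)]
  end.

Definition grayRow (n i : nat) : seq bool := nth [::] (grayM n) i.

Fixpoint hanoi_a (i j : 'I_3) (w : seq 'I_3) : seq 'I_3 :=
  match w with
  | [::] => [::]
  | c :: w' => if c == i then j :: w' else if c == j then i :: w' else c :: hanoi_a i j w'
  end.

Definition hanoi_adj : rel (seq 'I_3) :=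
  fun w v => [exists i : 'I_3, exists j : 'I_3, (i < j) && (v == hanoi_a i j w)].

(* p is a path from a to b: vertex list a :: p, of length size p *)
Definition is_path (a b : seq 'I_3) (p : seq (seq 'I_3)) : Prop :=
  path hanoi_adj a p /\ last a p = b.

Definition geodesic (a b : seq 'I_3) (p : seq (seq 'I_3)) : Prop :=
  is_path a b p /\ forall q, is_path a b q -> size p <= size q.

(* for x != y in {0,1,2}, 3 - x - y is the remaining element *)
Definition third (x y : 'I_3) : 'I_3 :=
  @Ordinal 3 ((3 - x - y) %% 3) (ltn_pmod _ (isT : 0 < 3)).

Fixpoint transduce (x y : 'I_3) (w : seq bool) : seq 'I_3 :=
  match w with
  | [::] => [::]
  | b :: w' => if b then y :: transduce y (third x y) w'
                    else x :: transduce x (third x y) w'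
  end.

From mathcomp Require Import all_boot fingroup perm zify.

(* The largest disk has to leave peg x and to end on peg y.  Forgetting it maps
   the part of a walk during which it stays on one peg to a walk in the graph of
   the smaller disks, and it can only move while all the smaller disks are
   stacked on the third peg.  By induction, the stretch before its first move
   and, reading the walk backwards, the stretch after its last move each visit
   at least 2^(n-1) vertices, so a path from x^n to y^n visits at least 2^n;
   equality forces a single move of the largest disk, directly from x to y,
   between two geodesics, i.e. the recursive solution [hanoi_opt].  The Gray
   code matrix is built by the same recursion, and it is the reversal of its
   second half that makes the transducer switch to state t_yz. *)

Set Implicit Arguments.
Unset Strict Implicit.
Unset Printing Implicit Defensive.

Lemma neq_third_l (x y : 'I_3) : x != y -> x != third x y.
Proof. by move: x y; do 2!case=> [[|[|[|?]]] ?] //. Qed.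

Lemma third_neq_r (x y : 'I_3) : x != y -> third x y != y.
Proof. by move: x y; do 2!case=> [[|[|[|?]]] ?] //. Qed.

Lemma thirdC (x y : 'I_3) : third x y = third y x.
Proof. by apply/val_inj; rewrite /= -subnDA addnC subnDA. Qed.

Lemma third_unique (x y a : 'I_3) : x != y -> a != x -> a != y -> a = third x y.
Proof. by move: x y a; do 3!case=> [[|[|[|?]]] ?] //; move=> *; apply/val_inj. Qed.

Lemma nseqSr T n (x : T) : nseq n.+1 x = rcons (nseq n x) x.
Proof. by elim: n => //= n <-. Qed.

Section HanoiMoves.
Variables i j : 'I_3.

Lemma hanoi_a_id u : ~~ has (pred2 i j) u -> hanoi_a i j u = u.
Proof. by elim: u => //= c u IH; case: ifP => //= _; case: ifP => //= _ /IH ->. Qed.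

Lemma hanoi_a_cat u w : hanoi_a i j (u ++ w) =
  if has (pred2 i j) u then hanoi_a i j u ++ w else u ++ hanoi_a i j w.
Proof.
elim: u => //= c u IH; case: ifP => //= _; case: ifP => //= _.
by rewrite IH; case: ifP.
Qed.

Lemma hanoi_a_rcons u c : hanoi_a i j (rcons u c) =
  if has (pred2 i j) u then rcons (hanoi_a i j u) c else rcons u (tperm i j c).
Proof.
rewrite -!cats1 hanoi_a_cat /=; case: ifP => // _.
by case: tpermP => [->|->|/eqP/negPf-> /eqP/negPf->]; rewrite ?eqxx //; case: eqP => // ->.
Qed.

Lemma size_hanoi_a u : size (hanoi_a i j u) = size u.
Proof. by elim: u => //= c u IH; case: ifP => // _; case: ifP => //= _; rewrite IH. Qed.

Lemma hanoi_aC u : hanoi_a i j u = hanoi_a j i u.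
Proof.
case: (eqVneq i j) => [->//|ij]; elim: u => //= c u ->.
by case: (eqVneq c i) => [->|]; rewrite ?(negPf ij).
Qed.

Lemma hanoi_aK u : i != j -> hanoi_a i j (hanoi_a i j u) = u.
Proof.
move=> ij; elim: u => //= c u IH.
case: (eqVneq c i) => [->|ci] /=; first by rewrite eq_sym (negPf ij) eqxx.
by case: (eqVneq c j) => [->|cj] /=; rewrite ?eqxx // (negPf ci) (negPf cj) IH.
Qed.

Lemma hanoi_adj_a u : i != j -> hanoi_adj u (hanoi_a i j u).
Proof.
move=> ij; case: (ltngtP i j) => [lt|gt|/val_inj eq]; last by rewrite eq eqxx in ij.
  by apply/existsP; exists i; apply/existsP; exists j; rewrite lt eqxx.
by apply/existsP; exists j; apply/existsP; exists i; rewrite gt hanoi_aC eqxx.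
Qed.

End HanoiMoves.

Lemma hanoi_adjP u v :
  reflect (exists i j, i != j /\ v = hanoi_a i j u) (hanoi_adj u v).
Proof.
apply: (iffP idP) => [/existsP[i /existsP[j /andP[lt /eqP->]]]|[i [j [ij ->]]]].
  by exists i, j; rewrite neq_ltn lt.
exact: hanoi_adj_a.
Qed.

Lemma hanoi_adjC u v : hanoi_adj u v = hanoi_adj v u.
Proof.
wlog suff: u v / hanoi_adj u v -> hanoi_adj v u by move=> sym; apply/idP/idP; apply: sym.
by case/hanoi_adjP=> [i [j [ij ->]]]; rewrite -{2}(hanoi_aK u ij); apply: hanoi_adj_a.
Qed.

Lemma size_hanoi_adj u v : hanoi_adj u v -> size v = size u.
Proof. by case/hanoi_adjP=> [i [j [_ ->]]]; rewrite size_hanoi_a. Qed.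

Lemma hanoi_adj_rcons u v c : hanoi_adj (rcons u c) (rcons v c) -> hanoi_adj u v.
Proof.
case/hanoi_adjP=> [i [j [ij]]]; rewrite hanoi_a_rcons.
case: ifP => [_ /rcons_inj[->]|/negbT/hanoi_a_id uij /rcons_inj[->]].
  exact: hanoi_adj_a.
by rewrite -{2}uij => _; apply: hanoi_adj_a.
Qed.

Lemma hanoi_adj_rcons_neq u v c d : hanoi_adj (rcons u c) (rcons v d) -> c != d ->
  v = u /\ u = nseq (size u) (third c d).
Proof.
case/hanoi_adjP=> [i [j [ij]]]; rewrite hanoi_a_rcons.
case: ifP => [_ /rcons_inj[_ ->]|uij /rcons_inj[-> ->] cd]; first by rewrite eqxx.
split=> //; apply/all_pred1P/allP => a au /=.
have /norP[ai aj] : ~~ pred2 i j a by apply: contraFN uij => ija; apply/hasP; exists a.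
move: cd; case: tpermP => [->|->|_ _]; rewrite ?eqxx // => cd; apply/eqP.
  exact: third_unique.
by rewrite thirdC; apply: third_unique; rewrite // eq_sym.
Qed.

(* Loops of the Schreier graph (a_ij fixing w) do not lift to the next level,
   so the optimal path is built from proper moves only. *)
Definition hanoi_move : rel (seq 'I_3) := fun u v => (u != v) && hanoi_adj u v.

Lemma hanoi_move_rcons u v c : hanoi_move u v -> hanoi_move (rcons u c) (rcons v c).
Proof.
case/andP=> uv /hanoi_adjP[i [j [ij ev]]].
have uij : has (pred2 i j) u by apply: contraR uv => /hanoi_a_id; rewrite -ev => ->.
apply/andP; split; first by rewrite (inj_eq (@rcons_injl _ c)).
by apply/hanoi_adjP; exists i, j; rewrite hanoi_a_rcons uij ev.
Qed.

Lemma hanoi_move_largest n x y : x != y ->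
  hanoi_move (rcons (nseq n (third x y)) x) (rcons (nseq n (third x y)) y).
Proof.
move=> xy; apply/andP; split; first by rewrite (inj_eq (@rcons_injr _ _)).
apply/hanoi_adjP; exists x, y; split=> //; rewrite hanoi_a_rcons tpermL has_nseq /=.
by rewrite (negPf (third_neq_r xy)) eq_sym (negPf (neq_third_l xy)) andbF.
Qed.

Fixpoint hanoi_opt (n : nat) (x y : 'I_3) : seq (seq 'I_3) :=
  if n is m.+1 then
    [seq rcons w x | w <- hanoi_opt m x (third x y)] ++
    [seq rcons w y | w <- hanoi_opt m (third x y) y]
  else [:: [::]].

Lemma size_hanoi_opt n x y : size (hanoi_opt n x y) = 2 ^ n.
Proof. by elim: n x y => //= n IH x y; rewrite size_cat !size_map !IH expnS mul2n addnn. Qed.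

Lemma hanoi_opt_rev n x y : hanoi_opt n x y = rev (hanoi_opt n y x).
Proof. by elim: n x y => //= n IH x y; rewrite rev_cat -!map_rev -!IH thirdC. Qed.

Lemma hanoi_opt_head n x y : hanoi_opt n x y = nseq n x :: behead (hanoi_opt n x y).
Proof. by elim: n x y => //= n IH x y; rewrite IH /= -nseqSr. Qed.

Lemma hanoi_opt_last n x y : last [::] (hanoi_opt n x y) = nseq n y.
Proof. by rewrite hanoi_opt_rev [hanoi_opt n y x]hanoi_opt_head rev_cons last_rcons. Qed.

Lemma sorted_hanoi_opt n x y : x != y -> sorted hanoi_move (hanoi_opt n x y).
Proof.
have lift c a s : path hanoi_move a s -> path hanoi_move (rcons a c) (map (rcons^~ c) s).
  by rewrite (path_map (f := rcons^~ c)); apply: sub_path => u v; exact: hanoi_move_rcons.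
elim: n x y => //= n IH x y xy; set z := third x y.
have := IH _ _ (neq_third_l xy); have := IH _ _ (third_neq_r xy); have := hanoi_opt_last n x z.
rewrite [hanoi_opt n x z]hanoi_opt_head [hanoi_opt n z y]hanoi_opt_head /=.
move=> last_xz /(lift y) path_zy /(lift x) path_xz.
by rewrite cat_path path_xz (last_map (rcons^~ x)) last_xz /= hanoi_move_largest.
Qed.

Lemma size_grayM n : size (grayM n) = 2 ^ n.
Proof. by elim: n => //= n IH; rewrite size_cat !size_map size_rev IH expnS mul2n addnn. Qed.

Lemma transduce_grayRow n x y i : i < 2 ^ n ->
  transduce x y (rev (grayRow n i)) = rev (nth [::] (hanoi_opt n x y) i).
Proof.
elim: n x y i => [|n IH] x y i; first by case: i.
rewrite expnS mul2n -addnn => lti.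
rewrite /grayRow /= !nth_cat !size_map size_grayM size_hanoi_opt.
case: ltnP => [lt_i|le_i].
  by rewrite !(nth_map [::]) ?size_grayM ?size_hanoi_opt // !rev_rcons /= IH.
have lt_i' : i - 2 ^ n < 2 ^ n by rewrite ltn_subLR.
rewrite !(nth_map [::]) ?size_rev ?size_grayM ?size_hanoi_opt // !rev_rcons /=.
rewrite nth_rev ?size_grayM // IH; last by have := expn_gt0 2 n; lia.
by rewrite [hanoi_opt n (third x y) y]hanoi_opt_rev nth_rev size_hanoi_opt.
Qed.

(* Words list the disks from the smallest to the largest, so the last letter is
   the peg of the largest disk ([ord0] is a junk value for the empty word). *)
Definition last_peg (w : seq 'I_3) : 'I_3 := last ord0 w.

Definition largest_on (c : 'I_3) : pred (seq 'I_3) := fun w => last_peg w == c.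

Lemma last_peg_rcons w c : last_peg (rcons w c) = c.
Proof. exact: last_rcons. Qed.

Lemma last_peg_nseq n x : last_peg (nseq n.+1 x) = x.
Proof. by rewrite nseqSr last_peg_rcons. Qed.

Lemma rcons_take_last_peg n w : size w = n.+1 -> rcons (take n w) (last_peg w) = w.
Proof.
case/lastP: w => // w c; rewrite size_rcons => -[<-].
by rewrite last_peg_rcons -!cats1 take_size_cat.
Qed.

Lemma count_largest_on_map_rcons c d s :
  count (largest_on d) (map (rcons^~ c) s) = (c == d) * size s.
Proof.
rewrite count_map (eq_count (a2 := fun=> c == d)) => [|w]; last first.
  by rewrite /= /largest_on last_peg_rcons.
by case: (c == d); rewrite ?count_pred0 ?count_predT ?mul1n.
Qed.

Lemma is_path_size a b p : is_path a b p -> {in a :: p, forall w, size w = size a}.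
Proof.
case=> hp _; elim: p a hp => [|v p IH] a; first by move=> _ w; rewrite inE => /eqP->.
case/andP=> /size_hanoi_adj sv /IH sp w; rewrite inE => /predU1P[->//|/sp].
by rewrite sv.
Qed.

Lemma is_path_rev a b p : is_path a b p -> exists2 q, is_path b a q & b :: q = rev (a :: p).
Proof.
case=> hp <-; exists (rev (belast a p)); last by rewrite [in RHS]lastI rev_rcons.
split; first by rewrite rev_path; apply: sub_path hp => u v; rewrite /= hanoi_adjC.
by case: p {hp} => //= v p; rewrite rev_cons last_rcons.
Qed.

Lemma is_path_suffix a b p s v r : a :: p = s ++ v :: r -> is_path a b p -> is_path v b r.
Proof.
move=> ep [hp hb]; split.
  by move: hp; rewrite -[path _ a p]/(sorted hanoi_adj (a :: p)) ep => /cat_sorted2[].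
by rewrite -hb -[last a p]/(last [::] (a :: p)) ep last_cat.
Qed.

Lemma is_path_largest_on n c a b p : is_path a b p -> size a = n.+1 ->
  all (largest_on c) (a :: p) ->
  is_path (take n a) (take n b) (map (take n) p) /\
  a :: p = map (rcons^~ c) (take n a :: map (take n) p).
Proof.
move=> hab sa onc.
have ea : a :: p = map (rcons^~ c) (map (take n) (a :: p)).
  rewrite -map_comp; apply/esym/map_id_in => w wp /=.
  rewrite -(eqP (allP onc w wp)); apply: rcons_take_last_peg.
  by rewrite (is_path_size hab wp).
split=> //; case: hab => hp <-; split; last by rewrite last_map.
move: hp; rewrite -[path _ a p]/(sorted _ (a :: p)) ea sorted_map.
by apply: sub_path => u v /hanoi_adj_rcons.
Qed.

Lemma is_path_first_move n x b p : is_path (nseq n.+1 x) b p -> last_peg b != x ->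
  exists t v r, [/\ nseq n.+1 x :: p = map (rcons^~ x) (nseq n x :: t) ++ v :: r,
    is_path (nseq n x) (take n v) t,
    take n v = nseq n (third x (last_peg v)) & x != last_peg v].
Proof.
move=> hab bx; set a := nseq n.+1 x.
have leaves : has (predC (largest_on x)) p.
  case: hab bx => _; case: p => [<-|v p <- vpx]; first by rewrite last_peg_nseq eqxx.
  by apply/hasP; exists (last v p); rewrite ?mem_last.
case/split_find: _ / leaves hab => v s r vx /hasPn s_on_x hab.
have [hs hvr] : is_path a (last a s) s /\ hanoi_adj (last a s) v.
  by case: hab; rewrite cat_rcons cat_path /= => /and3P[].
have on_x : all (largest_on x) (a :: s).
  by rewrite /= /largest_on last_peg_nseq eqxx; apply/allP => w /s_on_x /negPn.
have [ht ea] := is_path_largest_on hs (size_nseq _ _) on_x.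
have [ev et] : take n v = take n (last a s) /\
                take n (last a s) = nseq n (third x (last_peg v)).
  have sv : size v = n.+1.
    by rewrite -(size_nseq n.+1 x) (is_path_size hab) // inE mem_cat mem_rcons mem_head orbT.
  have sl : size (last a s) = n.+1 by rewrite (is_path_size hs) ?mem_last // size_nseq.
  rewrite -(rcons_take_last_peg sv) -(rcons_take_last_peg sl) in hvr.
  have := hanoi_adj_rcons_neq hvr; rewrite (eqP (allP on_x _ (mem_last a s))) eq_sym.
  by move=> /(_ vx)[-> ->]; rewrite size_takel ?sl.
exists (map (take n) s), v, r; rewrite -ev in ht et; split; rewrite 1?eq_sym //.
- by rewrite cat_rcons -cat_cons ea take_nseq.
- by rewrite /a take_nseq in ht.
Qed.

Lemma is_path_nseq_min n x y p : x != y -> is_path (nseq n x) (nseq n y) p ->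
  2 ^ n <= (size p).+1 /\ ((size p).+1 = 2 ^ n -> nseq n x :: p = hanoi_opt n x y).
Proof.
elim: n x y p => [|n IH] x y p xy hp.
  by split=> // -[/eqP]; rewrite size_eq0 => /eqP->.
have yx : last_peg (nseq n.+1 y) != x by rewrite last_peg_nseq eq_sym.
have [t [v [r [ep ht ev vx]]]] := is_path_first_move hp yx.
rewrite ev in ht; have [le_t eq_t] := IH _ _ _ (neq_third_l vx) ht.
(* The vertices with the largest disk on y all come after its first move, and
   the reversed walk shows that there are at least 2^n of them. *)
have le_y : 2 ^ n <= count (largest_on y) (v :: r).
  have [q hq erev] := is_path_rev hp.
  have xy' : last_peg (nseq n.+1 x) != y by rewrite last_peg_nseq.
  have [t' [w [r' [erev' ht' ew wy]]]] := is_path_first_move hq xy'.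
  rewrite ew in ht'; have [le_t' _] := IH _ _ _ (neq_third_l wy) ht'.
  apply: leq_trans le_t' _.
  have <- : count (largest_on y) (nseq n.+1 x :: p) = count (largest_on y) (v :: r).
    by rewrite ep count_cat count_largest_on_map_rcons (negPf xy).
  by rewrite -count_rev -erev erev' count_cat count_largest_on_map_rcons eqxx mul1n leq_addr.
have size_p : (size p).+1 = (size t).+1 + size (v :: r).
  by rewrite -[(size p).+1]/(size (nseq n.+1 x :: p)) ep size_cat size_map.
have le_vr := count_size (largest_on y) (v :: r).
rewrite expnS mul2n -addnn size_p; split=> [|size_eq]; first lia.
have [et all_y] : (size t).+1 = 2 ^ n /\ count (largest_on y) (v :: r) = size (v :: r) by lia.
have on_y : all (largest_on y) (v :: r) by rewrite all_count all_y.
have hvr := is_path_suffix ep hp.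
have sv : size v = n.+1.
  by rewrite -(size_nseq n.+1 y) -(proj2 hvr) (is_path_size hvr) ?mem_last.
have [hu evr] := is_path_largest_on hvr sv on_y.
have /andP[/eqP vy _] := on_y.
rewrite ev vy (take_nseq _ (leqnSn n)) in hu; have [_ eq_u] := IH _ _ _ (third_neq_r xy) hu.
rewrite ep eq_t ?vy // evr ev vy eq_u // size_map -[(size r).+1]/(size (v :: r)); lia.
Qed.

Theorem mainTheorem12 (n : nat) (x y : 'I_3) :
  0 < n -> x != y ->
  (exists p, geodesic (nseq n x) (nseq n y) p) /\
  forall p, geodesic (nseq n x) (nseq n y) p ->
  forall i, i < 2 ^ n ->
    i <= size p /\
    transduce x y (rev (grayRow n i)) = rev (nth [::] (nseq n x :: p) i).
Proof.
move=> _ xy; set p := behead (hanoi_opt n x y).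
have opt_path : is_path (nseq n x) (nseq n y) p.
  split; last by rewrite -(hanoi_opt_last n x y) [hanoi_opt n x y]hanoi_opt_head.
  by move: (sorted_hanoi_opt n xy); rewrite hanoi_opt_head; apply: sub_path => u v /andP[].
have size_p : (size p).+1 = 2 ^ n.
  by rewrite -(size_hanoi_opt n x y) [hanoi_opt n x y]hanoi_opt_head.
split.
  by exists p; split=> // q /(is_path_nseq_min xy)[le_q _]; rewrite -ltnS size_p.
move=> q [hq min_q] i lt_i; have [le_q eq_q] := is_path_nseq_min xy hq.
have size_q : (size q).+1 = 2 ^ n by apply/eqP; rewrite eqn_leq le_q -size_p ltnS min_q.
by rewrite -ltnS size_q eq_q // transduce_grayRow.
Qed.
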